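(* Let $k\ge2$ and $T\in\mathcal{GT}_k(n)$ with labelling $s$, and suppose $\omega_k(T)\preceq\omega_{k-1}(T)$. Then $s((k-1)1^-)=0$.
   Context: Type $C$ setting: $C_n=\{1<\cdots<n<\overline n<\cdots<\overline1\}$; a column is a strictly increasing word; $N_z(u)$ counts letters $x\le z$ or $x\ge\overline z$; admissible columns are nonempty columns with $N_z(u)\le z$ for all $z$. For admissible columns $c=x_1\cdots x_k$, $d=y_1\cdots y_l$, $c\preceq d$ iff $k\ge l$, $x_i\le y_i$ for $i\le l$, and there are no $1\le a\le b\le n$ and $1\le p\le q<r\le s\le l$ with ($x_p=a,y_q=b,y_r=\overline b,y_s=\overline a$ or $x_p=a,x_q=b,x_r=\overline b,y_s=\overline a$) and $(s-r)+(q-p)\ge b-a$. $\mathrm{ACol}(C_n)$ is the set of admissible columns plus a symbol $\epsilon$, and $\preceq$ is extended by $c\preceq\epsilon$ for all $c$, $\epsilon\not\preceq c$ for $c\ne\epsilon$. Blocks: $\mathfrak{c}(m)=12\cdots m$; $\mathfrak{c}(a,b)=(a+1)\cdots(a+b)$; $\mathfrak{c}(\overline a,c)=\overline a\cdots\overline{a-c+1}$ (empty when $b=0$ resp. $c=0$). $C$-trees: vertices $i$ ($i\ge1$), $im$ (outer), $im^-$ (inner) for $i,m\ge1$; $i$ has level $i$, $im,im^-$ level $i+m$; strand $i$ ordered $i<i1<i1^-<i2<\cdots$. A labelling of rank $k$ is $s$ from vertices of level $\le k$ to $\mathbb N$; valuation $q(v)=s(i)+\sum_{im\le v}s(im)-\sum_{im^-\le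 v}s(im^-)$ for $v$ on strand $i$; $n$-labelling if $0\le q\le n$. $\rho(i)=\mathfrak{c}(s(i))$; $\rho(im)=\mathfrak{c}(q(v'),s(im))$ with $v'$ the predecessor of $im$ on its strand; $\rho(im^-)=\mathfrak{c}(\overline{q(im)},s(im^-))$. Level reading $\omega_t(T)=\rho(t)\rho((t-1)1)\cdots\rho(1(t-1))\rho(1(t-1)^-)\cdots\rho((t-1)1^-)$, or $\epsilon$ if empty. $\mathcal{GT}_k(n)$: $n$-labellings of rank $k$ with each $\omega_t$ ($t\le k$) equal to $\epsilon$ or an admissible column. *)

From HB Require Import structures.
From mathcomp Require Import all_boot all_order all_algebra.
Set Implicit Arguments. Unset Strict Implicit. Unset Printing Implicit Defensive.
Import GRing.Theory Num.Theory.

(* [Pos i] is the letter i, [Neg i] is the letter bar i.  A letter belongs to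
   C_n iff its index lies in 1..n. *)
Inductive letter := Pos of nat | Neg of nat.

Definition letter_code (x : letter) : nat + nat :=
  match x with Pos i => inl i | Neg i => inr i end.
Definition code_letter (c : nat + nat) : letter :=
  match c with inl i => Pos i | inr i => Neg i end.
Lemma letter_codeK : cancel letter_code code_letter. Proof. by case. Qed.
HB.instance Definition _ := Equality.copy letter (can_type letter_codeK).

Definition in_Cn (n : nat) (x : letter) : bool :=
  match x with Pos i | Neg i => (1 <= i <= n)%N end.

Definition ltl (x y : letter) : bool :=
  match x, y with
  | Pos i, Pos j => (i < j)%N
  | Pos _, Neg _ => true
  | Neg _, Pos _ => false
  | Neg i, Neg j => (j < i)%N
  end.
Definition lel (x y : letter) : bool := (x == y) || ltl x y.

Definition is_column (u : seq letter) : bool := sorted ltl u.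

(* N_z(u) : number of letters x of u with x <= z or x >= bar z *)
Definition Nz (z : nat) (u : seq letter) : nat :=
  count (fun x => match x with Pos i | Neg i => (i <= z)%N end) u.

Definition admissible (n : nat) (u : seq letter) : Prop :=
  [/\ u != [::], all (in_Cn n) u, is_column u &
      forall z : nat, (1 <= z <= n)%N -> (Nz z u <= z)%N].

Definition col_preceq (n : nat) (c d : seq letter) : Prop :=
  let x i := nth (Pos 0) c i.-1 in
  let y i := nth (Pos 0) d i.-1 in
  [/\ (size d <= size c)%N,
      (forall i, (1 <= i <= size d)%N -> lel (x i) (y i)) &
      ~ (exists a b p q r s : nat,
           [/\ [/\ (1 <= a)%N, (a <= b)%N & (b <= n)%N],
               [/\ (1 <= p)%N, (p <= q)%N, (q < r)%N, (r <= s)%N & (s <= size d)%N],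
               ((x p = Pos a /\ y q = Pos b /\ y r = Neg b /\ y s = Neg a) \/
                (x p = Pos a /\ x q = Pos b /\ x r = Neg b /\ y s = Neg a)) &
               (b - a <= (s - r) + (q - p))%N])].

(* ACol(C_n) = admissible columns plus epsilon; epsilon is [None]. *)
Definition acol_preceq (n : nat) (c d : option (seq letter)) : Prop :=
  match c, d with
  | Some c', Some d' => col_preceq n c' d'
  | _, None => True
  | None, Some _ => False
  end.

Definition acol_ok (n : nat) (c : option (seq letter)) : Prop :=
  match c with None => True | Some u => admissible n u end.

(* vertices: [Root i] = i, [Out i m] = im (outer), [Inn i m] = im^- (inner),
   valid when i, m >= 1 *)
Inductive vertex := Root of nat | Out of nat & nat | Inn of nat & nat.

Definition valid_vertex (v : vertex) : bool :=
  match v with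
  | Root i => (1 <= i)%N
  | Out i m | Inn i m => (1 <= i)%N && (1 <= m)%N
  end.

Definition level (v : vertex) : nat :=
  match v with Root i => i | Out i m | Inn i m => i + m end.

(* a labelling of rank k is a map s defined on the vertices of level <= k;
   we encode it as a total map, only its values on valid vertices of level
   <= k being relevant. *)
Definition labelling := vertex -> nat.

Definition qval (s : labelling) (v : vertex) : int :=
  match v with
  | Root i => (s (Root i))%:Z
  | Out i m => (s (Root i))%:Z + (\sum_(1 <= j < m.+1) (s (Out i j))%:Z)
                 - (\sum_(1 <= j < m) (s (Inn i j))%:Z)
  | Inn i m => (s (Root i))%:Z + (\sum_(1 <= j < m.+1) (s (Out i j))%:Z)
                 - (\sum_(1 <= j < m.+1) (s (Inn i j))%:Z)
  end.

Definition n_labelling (n k : nat) (s : labelling) : Prop :=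
  forall v, valid_vertex v -> (level v <= k)%N ->
    (0 <= qval s v)%R /\ (qval s v <= n%:Z)%R.

Definition blk (m : nat) : seq letter := map Pos (iota 1 m).
Definition blk_up (a b : nat) : seq letter := map Pos (iota a.+1 b).
Definition blk_bar (a c : nat) : seq letter :=
  map (fun j => Neg (a - j)) (iota 0 c).

Definition pred_out (i m : nat) : vertex :=
  if m == 1%N then Root i else Inn i m.-1.

(* the nonnegative valuation as a natural number (q >= 0 for n-labellings) *)
Definition qnat (s : labelling) (v : vertex) : nat := `|qval s v|%N.

Definition rho (s : labelling) (v : vertex) : seq letter :=
  match v with
  | Root i => blk (s (Root i))
  | Out i m => blk_up (qnat s (pred_out i m)) (s (Out i m))
  | Inn i m => blk_bar (qnat s (Out i m)) (s (Inn i m))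
  end.

Definition level_word (s : labelling) (t : nat) : seq letter :=
  rho s (Root t)
  ++ flatten [seq rho s (Out (t - j) j) | j <- iota 1 t.-1]
  ++ flatten [seq rho s (Inn i (t - i)) | i <- iota 1 t.-1].

Definition omega (s : labelling) (t : nat) : option (seq letter) :=
  let w := level_word s t in if w == [::] then None else Some w.

Definition in_GT (k n : nat) (s : labelling) : Prop :=
  n_labelling n k s /\
  forall t, (1 <= t <= k)%N -> acol_ok n (omega s t).

From mathcomp Require Import all_boot all_order all_algebra.
From mathcomp Require Import zify.
Import GRing.Theory Num.Theory.

(* Write a, b, c for the labels of the vertices k-1, (k-1)1, (k-1)1^- of
   strand k-1.  The lower word omega_{k-1} starts with the block 1 2 ... a, and
   the entrywise domination in ⪯ forces the strictly increasing column
   omega_k to start with the same block.  The level-k word also contains the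
   blocks rho((k-1)1) = (a+1)...(a+b) and rho((k-1)1^-), which begins with the
   letter bar(a+b) when c > 0.  Hence omega_k contains 1, ..., a+b together
   with bar(a+b), i.e. a+b+1 letters counted by N_{a+b}, contradicting
   admissibility of omega_k (the n-labelling condition ensures 1 <= a+b <= n). *)

Definition letter_index (x : letter) : nat := match x with Pos i | Neg i => i end.

Lemma eqPos i j : (Pos i == Pos j) = (i == j).
Proof. by apply/eqP/eqP => [[]|->]. Qed.

Lemma ltl_trans : transitive ltl.
Proof. by move=> y x z; case: x => i; case: y => j; case: z => m /=; lia. Qed.

Lemma lel_Pos x m : lel x (Pos m) = if x is Pos i then (i <= m)%N else false.
Proof.
case: x => i; rewrite /lel /=; first by rewrite eqPos -leq_eqVlt.
by apply/eqP.
Qed.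

Lemma Nz_lower_bound z u L :
  uniq L -> {subset L <= u} -> all (fun l => letter_index l <= z)%N L ->
  (size L <= Nz z u)%N.
Proof.
move=> uniqL subLu smallL; rewrite /Nz -size_filter.
apply: uniq_leq_size => // l lL; rewrite mem_filter subLu // andbT.
by have := allP smallL l lL; case: l {lL}.
Qed.

(* A column of C_n whose first a entries lie below 1, 2, ..., a starts with
   exactly 1, 2, ..., a: the entries are >= 1 and strictly increasing. *)
Lemma column_below_identity {n u a} :
  all (in_Cn n) u -> is_column u -> (a <= size u)%N ->
  (forall j, j < a -> lel (nth (Pos 0) u j) (Pos j.+1))%N ->
  forall j, (j < a)%N -> nth (Pos 0) u j = Pos j.+1.
Proof.
move=> inCn col size_u below; elim=> [|j IH] ja.
  have := allP inCn _ (mem_nth (Pos 0) (leq_trans ja size_u)).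
  have := below 0%N ja; rewrite lel_Pos.
  by case: (nth _ u 0) => // i /= *; congr Pos; lia.
have incr : ltl (nth (Pos 0) u j) (nth (Pos 0) u j.+1).
  by apply: (sorted_ltn_nth ltl_trans) => //; rewrite inE; lia.
move: incr (below j.+1 ja); rewrite IH 1?ltnW // lel_Pos.
by case: (nth _ u j.+1) => // i /= *; congr Pos; lia.
Qed.

Lemma preceq_keeps_prefix {n u v a} :
  col_preceq n u v -> all (in_Cn n) u -> is_column u -> (a <= size v)%N ->
  (forall j, j < a -> nth (Pos 0) v j = Pos j.+1)%N ->
  {subset blk a <= u}.
Proof.
case=> size_vu dom _ inCn col size_v prefix_v.
have prefix_u : forall j, (j < a)%N -> nth (Pos 0) u j = Pos j.+1.
  apply: (column_below_identity inCn col (leq_trans size_v size_vu)) => j ja.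
  by have := dom j.+1; rewrite prefix_v //=; apply; lia.
move=> l /mapP [i]; rewrite mem_iota add1n => /andP [i_pos i_le] ->.
have i_lt : (i.-1 < a)%N by rewrite prednK.
rewrite -(prednK i_pos) -prefix_u //.
exact/mem_nth/(leq_trans i_lt)/(leq_trans size_v size_vu).
Qed.

(* An admissible column containing 1, ..., m (m <= n) contains no letter bar j
   with 1 <= j <= m: otherwise N_m would count m + 1 letters. *)
Lemma admissible_prefix_no_bar {n u m} j :
  admissible n u -> (m <= n)%N -> {subset blk m <= u} -> (1 <= j <= m)%N ->
  Neg j \notin u.
Proof.
case=> _ _ _ Nz_bound mn blk_u jm; apply/negP => Nj_u.
have : (size (blk m ++ [:: Neg j]) <= Nz m u)%N.
  apply: Nz_lower_bound.
  - rewrite cat_uniq map_inj_uniq ?iota_uniq /=; last by move=> ? ? [].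
    by rewrite orbF andbT; apply/mapP => -[].
  - by move=> l; rewrite mem_cat inE => /orP [/blk_u | /eqP ->].
  - rewrite all_cat all_map /= andbT; apply/andP; split; last lia.
    by apply/allP => i; rewrite mem_iota /=; lia.
have := Nz_bound m; rewrite size_cat size_map size_iota /=; lia.
Qed.

Lemma blk_split a b : blk (a + b) = blk a ++ blk_up a b.
Proof. by rewrite /blk /blk_up iotaD map_cat add1n. Qed.

Lemma level_word_size_root s t : (s (Root t) <= size (level_word s t))%N.
Proof. by rewrite /level_word size_cat size_map size_iota leq_addr. Qed.

Lemma level_word_nth_root s t j :
  (j < s (Root t))%N -> nth (Pos 0) (level_word s t) j = Pos j.+1.
Proof.
move=> jt; rewrite /level_word nth_cat size_map size_iota jt.
by rewrite (nth_map 0%N) ?size_iota // nth_iota.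
Qed.

Lemma rho_out_in_level_word s i m :
  (1 <= i)%N -> (1 <= m)%N -> {subset rho s (Out i m) <= level_word s (i + m)}.
Proof.
move=> i1 m1 l l_rho; rewrite /level_word !mem_cat; apply/or3P/Or32.
by apply/flatten_mapP; exists m; [rewrite mem_iota; lia | rewrite addnK].
Qed.

Lemma rho_inn_in_level_word s i m :
  (1 <= i)%N -> (1 <= m)%N -> {subset rho s (Inn i m) <= level_word s (i + m)}.
Proof.
move=> i1 m1 l l_rho; rewrite /level_word !mem_cat; apply/or3P/Or33.
by apply/flatten_mapP; exists i; [rewrite mem_iota; lia | rewrite addKn].
Qed.

Lemma rho_inn_head s i m :
  (0 < s (Inn i m))%N -> Neg (qnat s (Out i m)) \in rho s (Inn i m).
Proof.
by move=> pos; apply/mapP; exists 0%N; rewrite ?subn0 // mem_iota; lia.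
Qed.

Lemma qval_out1 s i : qval s (Out i 1) = Posz (s (Root i) + s (Out i 1)).
Proof. by rewrite /= big_nat1 big_geq // subr0 -PoszD. Qed.

Lemma qval_inn1 s i :
  qval s (Inn i 1) = (Posz (s (Root i) + s (Out i 1)) - Posz (s (Inn i 1)))%R.
Proof. by rewrite /= !big_nat1 -PoszD. Qed.

Lemma qnat_out1 s i : qnat s (Out i 1) = (s (Root i) + s (Out i 1))%N.
Proof. by rewrite /qnat qval_out1. Qed.

Lemma strand_head_bounds {n k s i} :
  n_labelling n k s -> (1 <= i)%N -> (i < k)%N ->
  (s (Root i) + s (Out i 1) <= n)%N /\ (s (Inn i 1) <= s (Root i) + s (Out i 1))%N.
Proof.
move=> lab i1 ik; split.
  have [_] := lab (Out i 1) ltac:(rewrite /= andbT //) ltac:(rewrite /= addn1 //).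
  by rewrite qval_out1 lez_nat.
have [] := lab (Inn i 1) ltac:(rewrite /= andbT //) ltac:(rewrite /= addn1 //).
by rewrite qval_inn1 subr_ge0 lez_nat.
Qed.

Lemma level_word_admissible {k n s t} :
  in_GT k n s -> level_word s t != [::] -> (1 <= t <= k)%N ->
  admissible n (level_word s t).
Proof. by case=> _ adm ne trange; have := adm t trange; rewrite /omega (negbTE ne). Qed.

Lemma acol_preceq_words {n s t t'} :
  level_word s t' != [::] -> acol_preceq n (omega s t) (omega s t') ->
  level_word s t != [::] /\ col_preceq n (level_word s t) (level_word s t').
Proof. by move=> ne'; rewrite /omega (negbTE ne'); case: ifPn. Qed.

Lemma root_block_in_upper_word {k n s} :
  in_GT k.+1 n s -> (1 <= k)%N -> acol_preceq n (omega s k.+1) (omega s k) ->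
  {subset blk (s (Root k)) <= level_word s k.+1}.
Proof.
move=> GT k1 pre; have [-> //|a_pos] := posnP (s (Root k)).
have ne : level_word s k != [::].
  by rewrite -size_eq0 -lt0n (leq_trans a_pos (level_word_size_root _ _)).
have [ne' pre'] := acol_preceq_words ne pre.
have [_ inCn col _] := level_word_admissible GT ne' ltac:(lia).
exact: preceq_keeps_prefix pre' inCn col (level_word_size_root _ _)
         (fun j => @level_word_nth_root s k j).
Qed.

Theorem proposition6p2 (n k : nat) (s : labelling) :
  (2 <= k)%N -> in_GT k n s ->
  acol_preceq n (omega s k) (omega s k.-1) ->
  s (Inn k.-1 1) = 0%N.
Proof.
case: k => [|K] //= K2 GT pre; have K1 : (1 <= K)%N by lia.
have [ab_n c_ab] := strand_head_bounds (proj1 GT) K1 (ltnSn K).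
have [// | c_pos] := posnP (s (Inn K 1)).
set a := s (Root K) in ab_n c_ab *; set b := s (Out K 1) in ab_n c_ab *.
have bar_in_x : Neg (a + b) \in level_word s K.+1.
  by rewrite -addn1 -qnat_out1; apply/rho_inn_in_level_word/rho_inn_head.
have blk_in_x : {subset blk (a + b) <= level_word s K.+1}.
  move=> l; rewrite blk_split mem_cat => /orP [l_root | l_out].
    exact: (root_block_in_upper_word GT K1 pre).
  rewrite -addn1; exact: rho_out_in_level_word.
have x_ne : level_word s K.+1 != [::] by case: (level_word s K.+1) bar_in_x.
have x_adm := level_word_admissible GT x_ne ltac:(lia).
by have := admissible_prefix_no_bar (a + b) x_adm ab_n blk_in_x ltac:(lia);
   rewrite bar_in_x.
Qed.
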